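(* Let $J_1,J_2\ge 0$ and $\beta\ge 0$. Then every infinite-volume Gibbs measure $\mu$ of the plaquette orbital model on $\mathbb Z^2$ at inverse temperature $\beta$ satisfies $\mathbb E_\mu(\mathbf S_{\boldsymbol r})=0$ for every $\boldsymbol r\in\mathbb Z^2$.
   Context: On $\mathbb Z^2$ (unit vectors $\boldsymbol e_1,\boldsymbol e_2$) nearest-neighbour edges are typed as follows: the horizontal edge $\langle \boldsymbol r,\boldsymbol r+\boldsymbol e_1\rangle$ is an $x$-edge if $r_1$ is even and a $z$-edge if $r_1$ is odd; the vertical edge $\langle\boldsymbol r,\boldsymbol r+\boldsymbol e_2\rangle$ is an $x$-edge if $r_2$ is even and a $z$-edge if $r_2$ is odd. Spins $\mathbf S_{\boldsymbol r}=(S^x_{\boldsymbol r},S^z_{\boldsymbol r})$ are unit vectors in $\mathbb R^2$, with a priori measure $\nu$ = uniform measure on the unit circle (normalized to total mass $\sqrt{2\pi}$). For finite $\Lambda\subset\mathbb Z^2$ let $\mathcal H_\Lambda(\mathbf S)=-J_1\sum S^x_{\boldsymbol r}S^x_{\boldsymbol r'}-J_2\sum S^z_{\boldsymbol r}S^z_{\boldsymbol r'}$, the first sum over $x$-edges and the second over $z$-edges having at least one endpoint in $\Lambda$. An infinite-volume Gibbs measure at inverse temperature $\beta$ is a probability measure $\mu$ on configurations $(\mathbf S_{\boldsymbol r})_{\boldsymbol r\in\mathbb Z^2}$ such that for every finite $\Lambda$, the conditional distribution of $(\mathbf S_{\boldsymbol r})_{\boldsymbol r\in\Lambda}$ given $(\mathbf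 S_{\boldsymbol r})_{\boldsymbol r\notin\Lambda}$ has density proportional to $e^{-\beta\mathcal H_\Lambda(\mathbf S)}$ with respect to $\prod_{\boldsymbol r\in\Lambda}\nu(d\mathbf S_{\boldsymbol r})$ (DLR condition). *)

From HB Require Import structures.
From mathcomp Require Import all_boot all_order all_algebra.
From mathcomp Require Import all_classical all_reals all_analysis.
Set Implicit Arguments. Unset Strict Implicit. Unset Printing Implicit Defensive.
Import Order.TTheory GRing.Theory Num.Theory.
Import numFieldNormedType.Exports.
Local Open Scope classical_set_scope.
Local Open Scope ring_scope.

(** Sites of Z^2 and spin configurations.  A spin S_r = (S^x_r, S^z_r) is
    stored as a pair in R*R (first component = x, second = z). *)
Definition site := (int * int)%type.
Definition spin_config (R : realType) := site -> (R * R)%type.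

Definition coord_sets (R : realType) : set (set (spin_config R)) :=
  [set A | exists (r : site) (B : set (R * R)%type),
     measurable B /\ A = (fun w : spin_config R => w r) @^-1` B].

Definition config (R : realType) := g_sigma_algebraType (@coord_sets R).

Definition bond_h (R : realType) (J1 J2 : R) (w : spin_config R) (b : site) : R :=
  let b' := (b.1 + 1, b.2)%R in
  if (2 %| b.1)%Z then - J1 * (w b).1 * (w b').1 else - J2 * (w b).2 * (w b').2.

Definition bond_v (R : realType) (J1 J2 : R) (w : spin_config R) (b : site) : R :=
  let b' := (b.1, b.2 + 1)%R in
  if (2 %| b.2)%Z then - J1 * (w b).1 * (w b').1 else - J2 * (w b).2 * (w b').2.

(** H_Lambda: sum over all edges having at least one endpoint in the finite
    set Lambda (given as a list of sites).  The horizontal edge <b,b+e1>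
    meets Lambda iff b \in Lambda or b + e1 \in Lambda, i.e. b \in Lambda or
    b \in Lambda - e1; similarly for vertical edges. *)
Definition hamiltonian (R : realType) (J1 J2 : R) (L : seq site)
    (w : spin_config R) : R :=
  \sum_(b <- undup (L ++ map (fun r : site => (r.1 - 1, r.2)%R) L)) bond_h J1 J2 w b
  + \sum_(b <- undup (L ++ map (fun r : site => (r.1, r.2 - 1)%R) L)) bond_v J1 J2 w b.

(** Integration against the a priori measure nu: uniform measure on the unit
    circle with total mass sqrt(2 pi), i.e. nu = (sqrt(2pi)/(2pi)) times the
    image of Lebesgue measure on [0, 2pi) under t |-> (cos t, sin t). *)
Definition nu_int (R : realType) (f : (R * R)%type -> \bar R) : \bar R :=
  ((Num.sqrt (2 * pi) / (2 * pi))%:E *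
   \int[lebesgue_measure]_(t in [set t : R | (0 <= t < 2 * pi)%R]) f (cos t, sin t))%E.

Definition upd (R : realType) (w : spin_config R) (r : site) (x : (R * R)%type)
  : spin_config R := fun r' => if r' == r then x else w r'.

(** Integral of F against prod_{r in s} nu(dS_r), the spins outside s being
    those of w (iterated integration; s is assumed duplicate-free). *)
Fixpoint nu_prod_int (R : realType) (s : seq site)
    (F : spin_config R -> \bar R) (w : spin_config R) : \bar R :=
  match s with
  | [::] => F w
  | r :: s' => nu_int (fun x => nu_prod_int s' F (upd w r x))
  end.

Definition spec_weight (R : realType) (J1 J2 beta : R) (L : seq site)
    (A : set (spin_config R)) (w : spin_config R) : \bar R :=
  nu_prod_int (undup L)
    (fun s => (\1_A s * expR (- beta * hamiltonian J1 J2 L s))%:E) w.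

(** Gibbs specification gamma_Lambda(A | w): the probability of A under the
    density proportional to exp(-beta H_Lambda) w.r.t. prod_{r in Lambda} nu,
    with boundary condition w outside Lambda.  (Numerator and partition
    function are finite and the latter positive, so [fine] is harmless.) *)
Definition gibbs_kernel (R : realType) (J1 J2 beta : R) (L : seq site)
    (A : set (spin_config R)) (w : spin_config R) : \bar R :=
  (fine (spec_weight J1 J2 beta L A w) /
   fine (spec_weight J1 J2 beta L setT w))%:E.

Definition outside_determined (R : realType) (L : seq site)
    (B : set (spin_config R)) : Prop :=
  forall w w' : spin_config R,
    (forall r, r \notin L -> w r = w' r) -> B w -> B w'.

(** DLR condition: for every finite Lambda, gamma_Lambda(. | w) is a version
    of the conditional distribution of mu given the spins outside Lambda:
    mu(A /\ B) = int_B gamma_Lambda(A | w) mu(dw) for all measurable A and all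
    measurable B determined by the spins outside Lambda. *)
Definition is_gibbs_measure (R : realType) (J1 J2 beta : R)
    (mu : probability (config R) R) : Prop :=
  forall (L : seq site) (A B : set (config R)),
    measurable A -> measurable B -> outside_determined L B ->
    mu (A `&` B) = (\int[mu]_(w in B) gibbs_kernel J1 J2 beta L A w)%E.

From HB Require Import structures.
From mathcomp Require Import all_boot all_order all_algebra.
From mathcomp Require Import all_classical all_reals all_analysis.
From mathcomp Require Import ring lra zify measurable_realfun.
Set Implicit Arguments. Unset Strict Implicit. Unset Printing Implicit Defensive.
Import Order.TTheory GRing.Theory Num.Theory.
Import numFieldNormedType.Exports.
Local Open Scope classical_set_scope.
Local Open Scope ring_scope.

(* The plaquette {2k, 2k+1} x {2l, 2l+1} contains both endpoints of every
   x-edge it touches, so flipping S^x -> -S^x on its four sites leaves every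
   H_Lambda invariant (the z-bonds do not see S^x); likewise flipping S^z on the
   plaquette {2k+1, 2k+2} x {2l+1, 2l+2}.  Both flips preserve the uniform
   measure on the circle.  The DLR equation with Lambda the plaquette then shows
   that a Gibbs measure is invariant under the flip, so E S^x_r = - E S^x_r for r
   in the plaquette; the integrals are finite because the same DLR equation
   forces every spin onto the unit circle. *)

Section measure_preserving_involution.
Import HBNNSimple.
Local Open Scope ereal_scope.
Context d (T : measurableType d) (R : realType) (mu : {measure set T -> \bar R}).
Variable phi : T -> T.
Hypothesis phiK : involutive phi.
Hypothesis measurable_preimage_phi : forall A, measurable A -> measurable (phi @^-1` A).
Hypothesis measure_preimage_phi : forall A, measurable A -> mu (phi @^-1` A) = mu A.

Let nnintegral (h : T -> \bar R) := ereal_sup [set sintegral mu (NonNegSimpleFun.sort k) |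
  k in [set k : {nnsfun T >-> R} | forall x, (k x)%:E <= h x]].

(* [k |-> k \o phi] maps the simple minorants of [h \o phi] to those of [h]
   and preserves their integrals; no measurability of [h] is needed. *)
Let nnintegral_comp_le (h : T -> \bar R) : nnintegral (h \o phi) <= nnintegral h.
Proof.
apply: ge_ereal_sup => _ [k /= kh <-].
have mk : measurable_fun [set: T] (k \o phi).
  move=> _ A mA; rewrite setTI.
  exact: (measurable_preimage_phi (measurable_funPTI k mA)).
have fk : finite_set (range (k \o phi)).
  by apply: sub_finite_set (fimfunP k) => _ [x _ <-]; exists (phi x).
have k0 x : (0 <= (k \o phi) x)%R by exact: fun_ge0.
pose kphi : {nnsfun T >-> R} := HB.pack (k \o phi)
  (isMeasurableFun.Build _ _ _ _ (k \o phi) mk)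
  (@FiniteImage.Build T R (k \o phi) fk) (@isNonNegFun.Build T R (k \o phi) k0).
apply: ereal_sup_ubound; exists kphi.
  by move=> x /=; have := kh (phi x); rewrite /= phiK.
rewrite /sintegral; apply: eq_fsbigr => r _; congr (_ * _).
exact: (measure_preimage_phi (measurable_funPTI k (measurable_set1 r))).
Qed.

Let nnintegral_comp (h : T -> \bar R) : nnintegral (h \o phi) = nnintegral h.
Proof.
apply/eqP; rewrite eq_le nnintegral_comp_le /=.
by rewrite -{1}[h](funext (fun x => congr1 h (phiK x))); exact: nnintegral_comp_le.
Qed.

Lemma integral_comp_involution (D : set T) (f : T -> \bar R) :
  (forall x, D (phi x) = D x) ->
  \int[mu]_(x in D) f (phi x) = \int[mu]_(x in D) f x.
Proof.
move=> D_phi; rewrite /integral.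
have -> : (fun x => f (phi x)) \_ D = (f \_ D) \o phi.
  apply/funext => x; rewrite /patch /=.
  by rewrite (_ : (phi x \in D) = (x \in D)) //; apply/idP/idP; rewrite !in_setE D_phi.
by rewrite funepos_comp funeneg_comp; congr (_ - _); exact: nnintegral_comp.
Qed.

End measure_preserving_involution.

Section reflection.
Context (R : realType).
Local Notation lambda := (@lebesgue_measure R).

Lemma measurable_fun_reflect (c : R) : measurable_fun [set: measurableTypeR R]
  ((fun t : R => c - t) : measurableTypeR R -> measurableTypeR R).
Proof. exact: (@measurable_realfun.measurable_funB _ _ _ _ (cst c) id). Qed.

Lemma measurable_preimage_reflect (c : R) (A : set R) : measurable A ->
  measurable ((fun t : R => c - t) @^-1` A).
Proof. by move=> mA; have := measurable_fun_reflect c measurableT mA; rewrite setTI. Qed.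

Lemma lebesgue_measure_preimage_reflect (c : R) (A : set R) : measurable A ->
  lambda ((fun t => c - t) @^-1` A) = lambda A.
Proof.
(* The measure structure of [pushforward] depends on a measurability proof,
   hence cannot be inferred and is named explicitly. *)
move=> mA; have := @lebesgue_measure_unique R
  (measure_function_pushforward__canonical__measure_function_Measure lambda
    (measurable_fun_reflect c)).
move=> munique; apply: esym; apply: (munique _ A mA) => _ [[a b]] _ <-.
rewrite /= /pushforward.
have -> : (fun t : R => c - t) @^-1` `]a, b]%classic = `[c - b, c - a[%classic.
  by apply/seteqP; split => t /=; rewrite !in_itv /= => /andP[? ?]; apply/andP; split; lra.
rewrite !lebesgue_measure_itv /= !lte_fin.
have -> : (c - b < c - a) = (a < b) by apply/idP/idP => ?; lra.
by case: ifP => // _; rewrite -!EFinD; congr (_%:E); lra.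
Qed.

Definition reflect_on (S : set R) (c t : R) : R := if t \in S then c - t else t.

Section reflect_on.
Variables (S : set R) (c : R).
Hypothesis mS : measurable S.
Hypothesis S_reflect : forall t, S t -> S (c - t).

Let reflectK t : c - (c - t) = t. Proof. by rewrite opprB addrC subrK. Qed.

Lemma reflect_on_in t : S t -> reflect_on S c t = c - t.
Proof. by move=> St; rewrite /reflect_on mem_set. Qed.

Lemma reflect_on_notin t : ~ S t -> reflect_on S c t = t.
Proof. by move=> nSt; rewrite /reflect_on memNset. Qed.

Lemma reflect_onK : involutive (reflect_on S c).
Proof.
move=> t; rewrite /reflect_on; have [St|nSt] := pselect (S t).
  by rewrite !mem_set ?reflectK //; exact: S_reflect.
by rewrite !memNset.
Qed.

Lemma preimage_reflect_on (A : set R) :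
  reflect_on S c @^-1` A = (~` S `&` A) `|` ((fun t => c - t) @^-1` (S `&` A)).
Proof.
apply/seteqP; split => t; rewrite /reflect_on /=.
  have [St|nSt] := pselect (S t); last by rewrite memNset // => At; left.
  by rewrite mem_set // => At; right; split => //; exact: S_reflect.
case=> [[nSt At]|[St At]]; first by rewrite memNset.
by rewrite mem_set // -[t]reflectK; exact: S_reflect.
Qed.

Lemma measurable_preimage_reflect_on (A : set R) : measurable A ->
  measurable (reflect_on S c @^-1` A).
Proof.
move=> mA; rewrite preimage_reflect_on; apply: measurableU.
  exact: measurableI (measurableC mS) mA.
by apply: measurable_preimage_reflect; exact: measurableI.
Qed.

Lemma lebesgue_measure_preimage_reflect_on (A : set R) : measurable A ->
  lambda (reflect_on S c @^-1` A) = lambda A.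
Proof.
move=> mA; rewrite preimage_reflect_on.
have mSA : measurable (S `&` A) by exact: measurableI.
have mSCA : measurable (~` S `&` A) by exact: measurableI (measurableC mS) mA.
have A_split : A = (~` S `&` A) `|` (S `&` A).
  by rewrite -setIUl setUC setUv setTI.
rewrite [in RHS]A_split !measureU //.
- by congr (_ + _); exact: lebesgue_measure_preimage_reflect.
- by apply/seteqP; split => t // [[? _] [? _]].
- exact: measurable_preimage_reflect.
- apply/seteqP; split => t // [[St _] [/S_reflect]]; rewrite reflectK.
  by move=> /St.
Qed.

Lemma integral_reflect_on (D : set R) (F : R -> \bar R) : S `<=` D ->
  (\int[lambda]_(t in D) F (reflect_on S c t) = \int[lambda]_(t in D) F t)%E.
Proof.
move=> SD; apply: integral_comp_involution.
- exact: reflect_onK.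
- exact: measurable_preimage_reflect_on.
- exact: lebesgue_measure_preimage_reflect_on.
- move=> t; rewrite /reflect_on; have [St|nSt] := pselect (S t); last by rewrite memNset.
  by rewrite mem_set //; apply/propext; split => _; apply: SD => //; exact: S_reflect.
Qed.

End reflect_on.

Lemma nu_int_flipx (Psi : R * R -> \bar R) :
  nu_int (fun x => Psi (- x.1, x.2)) = nu_int Psi.
Proof.
have pi_gt0 := pi_gt0 R.
rewrite /nu_int; congr (_ * _)%E.
set D := [set t : R | 0 <= t < 2 * pi].
(* On angles, x |-> (- x.1, x.2) is t |-> pi - t mod 2 pi: the reflection of
   [0, pi] about pi / 2 together with that of ]pi, 2 pi[ about 3 pi / 2. *)
have reflect_left (F : R -> \bar R) :
    (\int[lambda]_(t in D) F (reflect_on `[0%R, pi] pi t))%E =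
    (\int[lambda]_(t in D) F t)%E.
  apply: integral_reflect_on; first exact: measurable_itv.
    by move=> t; rewrite /= !in_itv /= => /andP[? ?]; apply/andP; split; lra.
  by move=> t; rewrite /= in_itv /= => /andP[? ?]; apply/andP; split; lra.
have reflect_right (F : R -> \bar R) :
    (\int[lambda]_(t in D) F (reflect_on `]pi, (2 * pi)%R[ (3 * pi)%R t))%E =
    (\int[lambda]_(t in D) F t)%E.
  apply: integral_reflect_on; first exact: measurable_itv.
    by move=> t; rewrite /= !in_itv /= => /andP[? ?]; apply/andP; split; lra.
  by move=> t; rewrite /= in_itv /= => /andP[? ?]; apply/andP; split; lra.
rewrite -reflect_left -reflect_right; apply: eq_integral => t /[!inE] /andP[t0 t2pi].
have [tpi|pit] := leP t pi.
  rewrite [reflect_on _ (3 * pi) t]reflect_on_notin; last first.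
    by rewrite /= in_itv /= => /andP[? ?]; lra.
  rewrite reflect_on_in; last by rewrite /= in_itv /=; apply/andP; split; lra.
  by rewrite cosB sinB cospi sinpi /=; congr (Psi (_, _)); ring.
rewrite [reflect_on _ (3 * pi) t]reflect_on_in; last first.
  by rewrite /= in_itv /=; apply/andP; split; lra.
rewrite reflect_on_notin; last by rewrite /= in_itv /= => /andP[? ?]; lra.
have -> : 3 * pi - t = (pi - t) + pi *+ 2 by rewrite mulr2n; ring.
by rewrite cosD2pi sinD2pi cosB sinB cospi sinpi /=; congr (Psi (_, _)); ring.
Qed.

Lemma nu_int_flipz (Psi : R * R -> \bar R) :
  nu_int (fun x => Psi (x.1, - x.2)) = nu_int Psi.
Proof.
have pi_gt0 := pi_gt0 R.
rewrite /nu_int; congr (_ * _)%E.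
rewrite -(@integral_reflect_on `]0, 2 * pi[ (2 * pi)); first last.
- by move=> t; rewrite /= in_itv /= => /andP[? ?]; apply/andP; split; lra.
- by move=> t; rewrite /= !in_itv /= => /andP[? ?]; apply/andP; split; lra.
- exact: measurable_itv.
apply: eq_integral => t /[!inE] /andP[t0 t2pi].
have [t_eq0|t_gt0] := eqVneq t 0.
  by rewrite t_eq0 reflect_on_notin ?sin0 ?oppr0 //= in_itv /= ltxx.
rewrite reflect_on_in; last first.
  by rewrite /= in_itv /=; apply/andP; split; [rewrite lt_neqAle eq_sym t_gt0|].
have -> : 2 * pi - t = - t + pi *+ 2 by rewrite mulr2n; ring.
by rewrite cosD2pi sinD2pi cosN sinN /= opprK.
Qed.

End reflection.

Definition plaquette (a b : int) : seq site :=
  [:: (a, b); (a + 1, b); (a, b + 1); (a + 1, b + 1)].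

Lemma mem_plaquette a b (r : site) :
  (r \in plaquette a b) = (a <= r.1 <= a + 1) && (b <= r.2 <= b + 1).
Proof. by case: r => r1 r2; rewrite !inE !xpair_eqE /=; lia. Qed.

Lemma plaquette_uniq a b : uniq (plaquette a b).
Proof. by rewrite /= !inE !xpair_eqE; lia. Qed.

Section spin_flip.
Context (R : realType).
Local Notation cfg := (spin_config R).

Definition flip_on (f : R * R -> R * R) (P : seq site) (w : cfg) : cfg :=
  fun r => if r \in P then f (w r) else w r.

Lemma flip_on_upd f P (w : cfg) q x : q \notin P ->
  flip_on f P (upd w q x) = upd (flip_on f P w) q x.
Proof.
move=> qP; apply/funext => r; rewrite /flip_on /upd.
by have [->|] := eqVneq r q; first rewrite (negbTE qP).
Qed.

Lemma flip_on_cons f p P (w : cfg) : p \notin P ->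
  flip_on f (p :: P) w = flip_on f [:: p] (flip_on f P w).
Proof.
move=> pP; apply/funext => r; rewrite /flip_on !inE.
by have [->|] := eqVneq r p; first rewrite (negbTE pP).
Qed.

Lemma nu_prod_int_flip_on_out f (P s : seq site) (G : cfg -> \bar R) w :
  {in s, forall q, q \notin P} ->
  nu_prod_int s (fun u => G (flip_on f P u)) w = nu_prod_int s G (flip_on f P w).
Proof.
elim: s w => [//|q s IH] w sP /=; congr nu_int; apply/funext => x.
rewrite IH ?flip_on_upd ?sP ?mem_head // => q' q's.
by apply: sP; rewrite inE q's orbT.
Qed.

Section nu_invariant_flip.
Variable f : R * R -> R * R.
Hypothesis nu_int_f : forall Psi : R * R -> \bar R, nu_int (fun x => Psi (f x)) = nu_int Psi.

Lemma nu_prod_int_flip1 p (s : seq site) (G : cfg -> \bar R) w : p \in s ->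
  nu_prod_int s (fun u => G (flip_on f [:: p] u)) w = nu_prod_int s G w.
Proof.
elim: s w => [//|q s IH] w /=; rewrite inE.
have [ps _|ps] := boolP (p \in s); first by congr nu_int; apply/funext => x; exact: IH.
rewrite orbF => /eqP <-; rewrite -[RHS](nu_int_f (fun x => nu_prod_int s G (upd w p x))).
congr nu_int; apply/funext => x; rewrite nu_prod_int_flip_on_out; last first.
  by move=> r rs; rewrite inE; apply: contraNneq ps => <-.
by congr nu_prod_int; apply/funext => r; rewrite /flip_on /upd inE; case: (r == p).
Qed.

Lemma nu_prod_int_flip_on (P s : seq site) (G : cfg -> \bar R) w :
  uniq P -> {subset P <= s} ->
  nu_prod_int s (fun u => G (flip_on f P u)) w = nu_prod_int s G w.
Proof.
elim: P G => [|p P IH] G /=.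
  by move=> _ _; congr nu_prod_int; apply/funext => u; congr G; apply/funext.
move=> /andP[pP uP] Ps; under eq_fun do rewrite flip_on_cons //.
rewrite (IH (fun u => G (flip_on f [:: p] u))) //; last first.
  by move=> q qP; apply: Ps; rewrite inE qP orbT.
by apply: nu_prod_int_flip1; apply: Ps; exact: mem_head.
Qed.

Lemma spec_weight_flip_on J1 J2 beta (L P : seq site) (A : set cfg) w :
  uniq P -> {subset P <= L} ->
  (forall u, hamiltonian J1 J2 L (flip_on f P u) = hamiltonian J1 J2 L u) ->
  spec_weight J1 J2 beta L (flip_on f P @^-1` A) w = spec_weight J1 J2 beta L A w.
Proof.
move=> uP PL H_flip; rewrite /spec_weight -[RHS](nu_prod_int_flip_on _ w uP); last first.
  by move=> p pP; rewrite mem_undup; exact: PL.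
by congr nu_prod_int; apply/funext => u; rewrite H_flip.
Qed.

End nu_invariant_flip.

Lemma measurable_coord (r : site) :
  measurable_fun [set: config R] (fun w : config R => w r).
Proof. by move=> _ B mB; rewrite setTI; apply: sub_sigma_algebra; exists r, B. Qed.

Lemma measurable_flip_on f P : measurable_fun [set: R * R] f ->
  measurable_fun [set: config R] (flip_on f P : config R -> config R).
Proof.
move=> mf; apply: (@measurability _ _ (config R) (config R) _ _ (@coord_sets R)) => //.
move=> _ [_ [r [B [mB ->]]] <-]; rewrite setTI; apply: sub_sigma_algebra.
exists r, (if r \in P then f @^-1` B else B); split.
  by case: ifP => // _; rewrite -[_ @^-1` _]setTI; exact: mf.
by apply/seteqP; split => w /=; rewrite /flip_on; case: ifP.
Qed.

End spin_flip.

Section gibbs.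
Context (R : realType) (J1 J2 beta : R) (mu : probability (config R) R).
Hypothesis mu_gibbs : is_gibbs_measure J1 J2 beta mu.

Lemma gibbs_flip_on_invariant f (P : seq site) (A : set (config R)) :
  (forall Psi : R * R -> \bar R, nu_int (fun x => Psi (f x)) = nu_int Psi) ->
  measurable_fun [set: R * R] f -> uniq P ->
  (forall w, hamiltonian J1 J2 P (flip_on f P w) = hamiltonian J1 J2 P w) ->
  measurable A -> mu (flip_on f P @^-1` A) = mu A.
Proof.
move=> nu_int_f mf uP H_flip mA.
have mfA : measurable (flip_on f P @^-1` A : set (config R)).
  by rewrite -[_ @^-1` _]setTI; exact: measurable_flip_on.
have P_out : outside_determined P [set: config R] by [].
have mu_kernel B : measurable B ->
    mu B = (\int[mu]_(w in [set: config R]) gibbs_kernel J1 J2 beta P B w)%E.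
  by move=> mB; rewrite -(mu_gibbs mB measurableT P_out) setIT.
rewrite !mu_kernel //; apply: eq_integral => w _.
by rewrite /gibbs_kernel spec_weight_flip_on.
Qed.

Lemma gibbs_null_off_circle (A : set (R * R)) (r : site) :
  measurable A -> (forall t, ~ A (cos t, sin t)) ->
  mu [set w : config R | A (w r)] = 0%E.
Proof.
move=> mA A_off.
have mE : measurable [set w : config R | A (w r)].
  by apply: sub_sigma_algebra; exists r, A.
have r_out : outside_determined [:: r] [set: config R] by [].
rewrite -[X in mu X]setIT (mu_gibbs mE measurableT r_out).
apply: integral0_eq => w _; rewrite /gibbs_kernel /spec_weight /= /nu_int.
rewrite integral0_eq ?mule0 ?mul0r // => t _.
by rewrite indicE memNset ?mul0r //= /upd eqxx; exact: A_off.
Qed.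

Lemma gibbs_integrable_coord (g : R * R -> R) (r : site) :
  measurable_fun [set: R * R] g -> (forall t, `|g (cos t, sin t)| <= 1) ->
  mu.-integrable [set: config R] (fun w : config R => (g (w r))%:E).
Proof.
move=> mg g_le1.
have mgr : measurable_fun [set: config R] (fun w : config R => g (w r)).
  exact: measurableT_comp mg (measurable_coord r).
have mA : measurable [set x : R * R | 1 < `|g x|].
  rewrite [X in measurable X](_ : _ = (fun x => `|g x|) @^-1` `]1, +oo[); last first.
    by apply/seteqP; split => x /=; rewrite in_itv /= andbT.
  by rewrite -[_ @^-1` _]setTI; apply: (measurableT_comp _ mg) => //; exact: measurable_itv.
apply/integrableP; split; first exact/measurable_EFinP.
apply: (@le_lt_trans _ _ (\int[mu]_(w in [set: config R]) (cst 1%E) w)%E); last first.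
  by rewrite integral_cst // mul1e; have /= -> := probability_setT mu; exact: ltry.
apply: ae_ge0_le_integral => //; first exact/measurableT_comp/measurable_EFinP.
exists [set w : config R | 1 < `|g (w r)|]; split.
- by apply: sub_sigma_algebra; exists r, [set x | 1 < `|g x|].
- by apply: (@gibbs_null_off_circle [set x | 1 < `|g x|]) => // t; rewrite /= ltNge g_le1.
- by move=> w /= not_le; rewrite ltNge; apply/negP => le1; apply: not_le => _; rewrite lee_fin.
Qed.

Lemma gibbs_odd_coord_integral0 f (g : R * R -> R) (P : seq site) (r : site) :
  (forall Psi : R * R -> \bar R, nu_int (fun x => Psi (f x)) = nu_int Psi) ->
  measurable_fun [set: R * R] f -> uniq P ->
  (forall w, hamiltonian J1 J2 P (flip_on f P w) = hamiltonian J1 J2 P w) ->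
  measurable_fun [set: R * R] g -> (forall t, `|g (cos t, sin t)| <= 1) ->
  (forall x, g (f x) = - g x) -> r \in P ->
  (\int[mu]_w (g ((w : spin_config R) r))%:E = 0)%E.
Proof.
move=> nu_int_f mf uP H_flip mg g_le1 g_odd rP.
pose T : config R -> config R := flip_on f P.
have mT : measurable_fun [set: config R] T by exact: measurable_flip_on.
have intg := gibbs_integrable_coord r mg g_le1.
have gT w : (g (T w r))%:E = (- (g (w r))%:E)%E by rewrite /T /flip_on rP g_odd EFinN.
have mu_T A : measurable A -> mu A = pushforward mu T A.
  by move=> mA; rewrite /pushforward gibbs_flip_on_invariant.
have int_oppE : (\int[mu]_w (g (w r))%:E = \int[mu]_w - (g (w r))%:E)%E.
  rewrite (eq_measure_integral (pushforward mu T)); last by move=> A mA _; exact: mu_T.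
  have mgr : measurable_fun [set: config R] (fun w : config R => (g (w r))%:E).
    by apply/measurable_EFinP; exact: measurableT_comp mg (measurable_coord r).
  rewrite (integral_pushforward mT mgr) ?preimage_setT //.
    by apply: eq_integral => w _; rewrite /= gT.
  by apply: eq_integrable (integrableN intg) => // w _; rewrite /= gT.
move: int_oppE; rewrite integralN; last first.
  by rewrite fin_num_adde_defl // fin_numN integrable_fin_num // integrable_funeneg.
case: (\int[mu]_w _)%E => //= x [/eqP]; rewrite -subr_eq0 opprK -mulr2n mulrn_eq0 /=.
by move/eqP->.
Qed.

End gibbs.

Section plaquette_flips.
Context (R : realType) (J1 J2 : R).

Lemma hamiltonian_flipx_plaquette k l (L : seq site) (w : spin_config R) :
  hamiltonian J1 J2 L (flip_on (fun x => (- x.1, x.2)) (plaquette (2 * k) (2 * l)) w) =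
  hamiltonian J1 J2 L w.
Proof.
rewrite /hamiltonian; congr (_ + _); apply: eq_bigr => -[b1 b2] _.
- rewrite /bond_h /flip_on /=; case: ifP => b1_even; last by case: ifP; case: ifP.
  have -> : ((b1 + 1, b2) \in plaquette (2 * k) (2 * l)) =
            ((b1, b2) \in plaquette (2 * k) (2 * l)).
    by rewrite !mem_plaquette /=; lia.
  by case: ifP => _ //=; ring.
- rewrite /bond_v /flip_on /=; case: ifP => b2_even; last by case: ifP; case: ifP.
  have -> : ((b1, b2 + 1) \in plaquette (2 * k) (2 * l)) =
            ((b1, b2) \in plaquette (2 * k) (2 * l)).
    by rewrite !mem_plaquette /=; lia.
  by case: ifP => _ //=; ring.
Qed.

Lemma hamiltonian_flipz_plaquette k l (L : seq site) (w : spin_config R) :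
  hamiltonian J1 J2 L
    (flip_on (fun x => (x.1, - x.2)) (plaquette (2 * k + 1) (2 * l + 1)) w) =
  hamiltonian J1 J2 L w.
Proof.
rewrite /hamiltonian; congr (_ + _); apply: eq_bigr => -[b1 b2] _.
- rewrite /bond_h /flip_on /=; case: ifP => b1_even; first by case: ifP; case: ifP.
  have -> : ((b1 + 1, b2) \in plaquette (2 * k + 1) (2 * l + 1)) =
            ((b1, b2) \in plaquette (2 * k + 1) (2 * l + 1)).
    by rewrite !mem_plaquette /=; lia.
  by case: ifP => _ //=; ring.
- rewrite /bond_v /flip_on /=; case: ifP => b2_even; first by case: ifP; case: ifP.
  have -> : ((b1, b2 + 1) \in plaquette (2 * k + 1) (2 * l + 1)) =
            ((b1, b2) \in plaquette (2 * k + 1) (2 * l + 1)).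
    by rewrite !mem_plaquette /=; lia.
  by case: ifP => _ //=; ring.
Qed.

End plaquette_flips.

Unset Implicit Arguments.

Theorem theorem2p2 (R : realType) (J1 J2 beta : R)
  (hJ1 : 0 <= J1) (hJ2 : 0 <= J2) (hbeta : 0 <= beta)
  (mu : probability (config R) R) :
  is_gibbs_measure J1 J2 beta mu ->
  forall r : site,
    (\int[mu]_w ((w : spin_config R) r).1%:E = 0)%E /\
    (\int[mu]_w ((w : spin_config R) r).2%:E = 0)%E.
Proof.
move=> mu_gibbs [r1 r2]; split.
- apply: (gibbs_odd_coord_integral0 mu_gibbs (f := fun x => (- x.1, x.2)) (g := fst)
    (P := plaquette (2 * (r1 %/ 2)%Z) (2 * (r2 %/ 2)%Z))).
  + exact: nu_int_flipx.
  + by apply: measurable_fun_pair => //; exact: measurableT_comp measurable_fst.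
  + exact: plaquette_uniq.
  + by move=> w; exact: hamiltonian_flipx_plaquette.
  + exact: measurable_fst.
  + by move=> t; exact: cos_max.
  + by [].
  + by rewrite mem_plaquette /=; lia.
- apply: (gibbs_odd_coord_integral0 mu_gibbs (f := fun x => (x.1, - x.2)) (g := snd)
    (P := plaquette (2 * ((r1 - 1) %/ 2)%Z + 1) (2 * ((r2 - 1) %/ 2)%Z + 1))).
  + exact: nu_int_flipz.
  + by apply: measurable_fun_pair => //; exact: measurableT_comp measurable_snd.
  + exact: plaquette_uniq.
  + by move=> w; exact: hamiltonian_flipz_plaquette.
  + exact: measurable_snd.
  + by move=> t; exact: sin_max.
  + by [].
  + by rewrite mem_plaquette /=; lia.
Qed.
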